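(* Let $(\log\rho_i)_{i\in\mathbb Z}$ be i.i.d. real random variables with $\mathbb P[\log\rho_0>0]>0$ and $\mathbb P[\log\rho_0<0]>0$, let $V$ be the associated random walk defined below, and assume moreover $\liminf_{x\to+\infty}V(x)=-\infty$ almost surely. Let $h>0$. Then: (i) the processes $\big(V[m_1(h)-k]-V[m_1(h)],\ 0\le k\le m_1(h)\big)$ and $\big(V[m_1(h)+k]-V[m_1(h)],\ 0\le k\le T^\uparrow(h)-m_1(h)\big)$ are independent; (ii) the process $\big(V[m_1(h)+k]-V[m_1(h)],\ 0\le k\le T^\uparrow(h)-m_1(h)\big)$ is equal in law to $\big(V(k),\ 0\le k\le T_V([h,+\infty[)\big)$ conditioned on $\{T_V([h,+\infty[)<T_V(]-\infty,0[)\}$.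
   Context: $V(x)=\sum_{k=1}^x\log\rho_k$ for $x>0$, $V(0)=0$, $V(x)=-\sum_{k=x+1}^0\log\rho_k$ for $x<0$. $V^\uparrow(x)=\max_{0\le i\le j\le x}[V(j)-V(i)]$ for $x\in\mathbb N$; $T^\uparrow(h)=\min\{x\ge0:V^\uparrow(x)\ge h\}$; $m_1(h)=\min\{x\ge0:V(x)=\min_{[0,T^\uparrow(h)]}V\}$. For $A\subset\mathbb R$, $T_V(A)=\min\{x\ge1:V(x)\in A\}$. *)

From HB Require Import structures.
From mathcomp Require Import all_boot all_order all_algebra.
From mathcomp Require Import all_classical all_reals all_analysis.
Set Implicit Arguments. Unset Strict Implicit. Unset Printing Implicit Defensive.
Import Order.TTheory GRing.Theory Num.Theory.
Local Open Scope classical_set_scope.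
Local Open Scope ring_scope.

Section RW.
Context {R : realType}.

(** The random walk V associated to (log rho_i)_{i in Z}, given by lr = log rho:
    V(x) = sum_{k=1}^x lr k (x > 0), V 0 = 0, V(x) = - sum_{k=x+1}^0 lr k (x < 0). *)
Definition Vwalk (lr : int -> R) (x : int) : R :=
  match x with
  | Posz n => \sum_(1 <= k < n.+1) lr (k%:Z)
  | Negz n => - \sum_(0 <= k < n.+1) lr (- (k%:Z))
  end.

Definition Vn (lr : int -> R) (n : nat) : R := Vwalk lr (n%:Z).

Definition Vup (lr : int -> R) (x : nat) : R :=
  \big[Num.max/0]_(j < x.+1) \big[Num.max/0]_(i < j.+1) (Vn lr j - Vn lr i).

(** min { n : nat | p n }, with min of the empty set = +oo encoded as None *)
Definition first_nat (p : pred nat) : option nat :=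
  match pselect (exists n, p n) with
  | left H => Some (ex_minn H)
  | right _ => None
  end.

Definition Tup (lr : int -> R) (h : R) : option nat :=
  first_nat (fun x => h <= Vup lr x).

Definition minV (lr : int -> R) (t : nat) : R :=
  \big[Num.min/Vn lr 0]_(k < t.+1) Vn lr k.

Definition m1 (lr : int -> R) (h : R) : option nat :=
  obind (fun t => first_nat (fun x => Vn lr x == minV lr t)) (Tup lr h).

Definition TV_ge (lr : int -> R) (h : R) : option nat :=
  first_nat (fun x => (1 <= x)%N && (h <= Vn lr x)).
Definition TV_neg (lr : int -> R) : option nat :=
  first_nat (fun x => (1 <= x)%N && (Vn lr x < 0)).

Definition lt_opt (a b : option nat) : bool :=
  match a, b with
  | Some x, Some y => (x < y)%N
  | Some _, None => true
  | None, _ => false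
  end.

Definition left_path (lr : int -> R) (h : R) : option (seq R) :=
  match Tup lr h, m1 lr h with
  | Some _, Some m => Some [seq Vn lr (m - k) - Vn lr m | k <- iota 0 m.+1]
  | _, _ => None
  end.

Definition right_path (lr : int -> R) (h : R) : option (seq R) :=
  match Tup lr h, m1 lr h with
  | Some t, Some m => Some [seq Vn lr (m + k) - Vn lr m | k <- iota 0 (t - m).+1]
  | _, _ => None
  end.

Definition hit_path (lr : int -> R) (h : R) : option (seq R) :=
  match TV_ge lr h with
  | Some t => Some [seq Vn lr k | k <- iota 0 t.+1]
  | None => None
  end.

End RW.

Section Prob.
Context {d : measure_display} {T : measurableType d} {R : realType}.
Local Open Scope ereal_scope.

Definition cyl (n : nat) (B : nat -> set R) : set (seq R) :=
  [set s | size s = n.+1 /\ forall k, (k <= n)%N -> B k (nth 0%R s k)].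

Definition pev (X : T -> option (seq R)) (S : set (seq R)) : set T :=
  [set w | exists s, X w = Some s /\ S s].

(** Independence of two random finite paths: product rule on the pi-system of
    cylinder events (length fixed, coordinates in Borel sets), which generates
    the sigma-algebra of the disjoint union of the R^(n+1). *)
Definition paths_indep (P : probability T R) (X Y : T -> option (seq R)) : Prop :=
  forall (n1 n2 : nat) (B1 B2 : nat -> set R),
    (forall k, measurable (B1 k)) -> (forall k, measurable (B2 k)) ->
    P (pev X (cyl n1 B1) `&` pev Y (cyl n2 B2)) =
    P (pev X (cyl n1 B1)) * P (pev Y (cyl n2 B2)).

Definition cond_prob (P : probability T R) (E A : set T) : R :=
  (fine (P (E `&` A)) / fine (P A))%R.

Definition path_law_cond (P : probability T R) (X Y : T -> option (seq R)) (A : set T)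
  : Prop :=
  forall (n : nat) (B : nat -> set R), (forall k, measurable (B k)) ->
    fine (P (pev X (cyl n B))) = cond_prob P (pev Y (cyl n B)) A.

Definition mutual_indep (P : probability T R) (X : int -> T -> R) : Prop :=
  forall (I : seq int) (B : int -> set R), uniq I -> (forall i, measurable (B i)) ->
    P (\bigcap_(i in [set` I]) (X i @^-1` B i)) = \prod_(i <- I) P (X i @^-1` B i).

Definition ident_distr (P : probability T R) (X : int -> T -> R) : Prop :=
  forall (i : int) (B : set R), measurable B -> P (X i @^-1` B) = P (X 0%Z @^-1` B).

End Prob.

From HB Require Import structures.
From mathcomp Require Import all_boot all_order all_algebra.
From mathcomp Require Import all_classical all_reals all_analysis.
From mathcomp Require Import measurable_realfun ring lra zify.
Set Implicit Arguments. Unset Strict Implicit. Unset Printing Implicit Defensive.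
Import Order.TTheory GRing.Theory Num.Theory.
Local Open Scope classical_set_scope.
Local Open Scope ring_scope.

(* Let s be the sequence of steps (log rho_(i+1))_(i >= 0), whose partial sums are V on nat.
   Deterministically, m1(h) = m and T^up(h) = m + n exactly when
   - V(m) is a strict running minimum and V has no rise of height h on [0, m]
     ([bottom_before h s m]), a condition on the first m steps, and
   - the walk restarted at m stays in [0, h) before time n and reaches [h, oo) at time n
     ([exits_top h (shiftn m s) n]), a condition on the later steps.
   For i.i.d. steps the two conditions are independent and the shifted steps have the
   law of s. Let L_m and E be the events of the two conditions, A a set of paths of
   length a + 1 and B a set of paths. Then P(left in A, right in B) = P(L_a /\ A) P(E /\ B),
   P(left in A) = P(L_a /\ A) P(E) and P(right in B) = sum_m P(L_m) P(E /\ B). Finally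
   sum_m P(L_m) P(E) = P(T^up(h) < oo) = 1, because some block of K consecutive steps all
   above h/K occurs almost surely; so P(right in B) = P(E /\ B) / P(E), where E is the
   conditioning event and E /\ B the event that (V(k), k <= T_V([h, oo[)) lies in B. *)

Lemma first_natP (p : pred nat) n :
  first_nat p = Some n <-> p n /\ forall k, (k < n)%N -> ~~ p k.
Proof.
rewrite /first_nat; case: pselect => [ex|nex]; last first.
  by split => // -[pn _]; case: nex; exists n.
case: ex_minnP => m pm minm; split => [[<-]|[pn ltn_np]].
  by split => // k; apply: contraTN => /minm; rewrite -leqNgt.
congr Some; apply/eqP; rewrite eqn_leq minm //=.
by rewrite leqNgt; apply/negP => /ltn_np; rewrite pm.
Qed.

Lemma first_natNone (p : pred nat) : first_nat p = None <-> forall n, ~~ p n.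
Proof.
rewrite /first_nat; case: pselect => [[n pn]|nex]; split => //.
  by move=> /(_ n); rewrite pn.
by move=> _ n; apply/negP => pn; apply: nex; exists n.
Qed.

Lemma first_nat_exists (p : pred nat) n : p n -> exists m, first_nat p = Some m.
Proof.
move=> pn; case E: (first_nat p) => [m|]; first by exists m.
by move/first_natNone: E => /(_ n); rewrite pn.
Qed.

Section partial_sums.
Context {R : zmodType}.
Implicit Types s : nat -> R.

Definition psum s n : R := \sum_(i < n) s i.
Definition shiftn m s : nat -> R := fun i => s (m + i)%N.

Lemma psum0 s : psum s 0 = 0. Proof. exact: big_ord0. Qed.

Lemma psumD s m k : psum s (m + k) = psum s m + psum (shiftn m s) k.
Proof. exact: big_split_ord. Qed.

Lemma psum_shiftn s m k : psum (shiftn m s) k = psum s (m + k) - psum s m.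
Proof. by rewrite psumD addrC addKr. Qed.

End partial_sums.

Section walk.
Context {R : realType}.
Implicit Types (s u : nat -> R) (lr : int -> R).

Definition incr lr : nat -> R := fun i => lr (i.+1)%:Z.
Definition walk_of s : int -> R := fun z => if z is Posz k.+1 then s k else 0.

Lemma incr_walk_of s : incr (walk_of s) = s. Proof. by []. Qed.

Lemma Vn_psum lr n : Vn lr n = psum (incr lr) n.
Proof. by rewrite /Vn /Vwalk /psum big_add1 /= big_mkord. Qed.

Lemma minV_le lr t k : (k <= t)%N -> minV lr t <= Vn lr k.
Proof. by move=> kt; exact: (bigmin_le _ (Ordinal (kt : k < t.+1)%N)). Qed.

Lemma minV_attained lr t : exists2 k, (k <= t)%N & minV lr t = Vn lr k.
Proof.
have /bigmin_leP[le0|[k _ lek]] := lexx (minV lr t).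
  by exists 0%N => //; apply/le_anti; rewrite le0 minV_le.
by exists k; [exact: ltn_ord k|apply/le_anti; rewrite lek minV_le // -ltnS].
Qed.

Lemma minV_eq lr t c : (forall k, (k <= t)%N -> c <= Vn lr k) ->
  (exists2 k, (k <= t)%N & Vn lr k = c) -> minV lr t = c.
Proof.
move=> cle [k kt ck]; apply/le_anti; rewrite -{1}ck minV_le //=.
by apply/bigmin_geP; split => [|i _]; apply: cle; rewrite // -ltnS.
Qed.

Variable h : R.
Hypothesis h_gt0 : 0 < h.

Definition has_rise s x :=
  exists i j, (i <= j <= x)%N /\ h <= psum s j - psum s i.

Definition bottom_before s m :=
  (forall j, (j < m)%N -> psum s m < psum s j) /\
  (forall i j, (i <= j <= m)%N -> psum s j - psum s i < h).

Definition exits_top u n :=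
  (forall k, (k < n)%N -> 0 <= psum u k /\ psum u k < h) /\ h <= psum u n.

Lemma Vup_geP lr x : h <= Vup lr x <-> has_rise (incr lr) x.
Proof.
split.
  case/bigmax_geP => [|[j _ /bigmax_geP[|[i _ hij]]]]; try by rewrite leNgt h_gt0.
  by exists i, j; rewrite -!Vn_psum (ltnSE (ltn_ord i)) (ltnSE (ltn_ord j)).
move=> [i [j [/andP[ij jx] hij]]]; apply/bigmax_geP; right.
exists (Ordinal (jx : j < x.+1)%N) => //; apply/bigmax_geP; right.
by exists (Ordinal (ij : i < j.+1)%N) => //; rewrite !Vn_psum.
Qed.

Lemma TupP lr t : Tup lr h = Some t <->
  has_rise (incr lr) t /\ forall x, (x < t)%N -> ~ has_rise (incr lr) x.
Proof.
rewrite /Tup first_natP /= Vup_geP; split => -[rt nr]; split => // x /nr.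
  by move/negP; rewrite Vup_geP.
by rewrite -Vup_geP => /negP.
Qed.

Lemma m1P lr t m : Tup lr h = Some t -> m1 lr h = Some m <->
  Vn lr m = minV lr t /\ forall k, (k < m)%N -> Vn lr k != minV lr t.
Proof. by move=> Ht; rewrite /m1 Ht /= first_natP; split => -[/eqP]. Qed.

Lemma bottom_before_le s m n k : bottom_before s m -> exits_top (shiftn m s) n ->
  (k <= m + n)%N -> psum s m <= psum s k.
Proof.
move=> [ltm _] [stay exit] kmn; have [km|mk] := ltnP k m; first exact/ltW/ltm.
rewrite -(subnKC mk) psumD lerDl; have [kn|nk] := ltnP (k - m) n.
  by case: (stay _ kn).
suff -> : (k - m = n)%N by rewrite (le_trans (ltW h_gt0)).
by apply/eqP; rewrite eqn_leq nk leq_subLR kmn.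
Qed.

Lemma Tup_m1_of_bottom lr m n :
  bottom_before (incr lr) m -> exits_top (shiftn m (incr lr)) n ->
  Tup lr h = Some (m + n)%N /\ m1 lr h = Some m.
Proof.
set s := incr lr => bm en; have mle := bottom_before_le bm en.
have Ht : Tup lr h = Some (m + n)%N.
  apply/TupP; split.
    by exists m, (m + n)%N; rewrite leqnn leq_addr -psum_shiftn; case: en.
  move=> x xmn [i [j [/andP[ij jx] hij]]]; have [jm|mj] := leqP j m.
    by have := bm.2 i j; rewrite ij jm => /(_ isT); lra.
  have /(en.1 (j - m)%N) [_] : (j - m < n)%N by lia.
  rewrite psum_shiftn subnKC; last exact: ltnW.
  have : psum s m <= psum s i by apply: mle; lia.
  lra.
split => //; apply/(m1P _ Ht); rewrite (@minV_eq _ _ (Vn lr m)).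
- by split=> // k km; rewrite !Vn_psum gt_eqF // bm.1.
- by move=> k kmn; rewrite !Vn_psum mle.
- by exists m; rewrite ?leq_addr.
Qed.

Lemma bottom_of_Tup_m1 lr t m : Tup lr h = Some t -> m1 lr h = Some m ->
  [/\ (m <= t)%N, bottom_before (incr lr) m & exits_top (shiftn m (incr lr)) (t - m)].
Proof.
set s := incr lr => Ht /(m1P _ Ht) [Hm firstm].
have [[i [j [/andP[ij jt] hij]]] nrise] := (TupP lr t).1 Ht.
have mle k : (k <= t)%N -> psum s m <= psum s k.
  by move=> kt; rewrite -!Vn_psum Hm minV_le.
have mt : (m <= t)%N.
  have [k kt Hk] := minV_attained lr t; rewrite leqNgt; apply/negP => tm.
  by have := firstm k (leq_ltn_trans kt tm); rewrite Hk eqxx.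
have jt' : j = t.
  apply/eqP; rewrite eqn_leq jt leqNgt; apply/negP => jlt.
  by apply: (nrise j jlt); exists i, j; rewrite ij leqnn.
subst j; have rise_m : h <= psum s t - psum s m.
  by have := mle i (leq_trans ij jt); lra.
have mlt : (m < t)%N.
  rewrite ltn_neqAle mt andbT; apply/eqP => mt'.
  by move: rise_m; rewrite mt' subrr leNgt h_gt0.
split => //; split.
- move=> j jm; rewrite lt_neqAle mle ?andbT; last by lia.
  by rewrite -!Vn_psum Hm eq_sym firstm.
- move=> i' j' ijm; rewrite ltNge; apply/negP => hij'.
  by apply: (nrise m mlt); exists i', j'.
- move=> k km; rewrite psum_shiftn subr_ge0 mle; last by lia.
  split => //; rewrite ltNge; apply/negP => hk; apply: (nrise (m + k)%N); first by lia.
  by exists m, (m + k)%N; rewrite leqnn leq_addr.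
- by rewrite psum_shiftn subnKC.
Qed.
End walk.

Section path_events.
Context {R : realType}.
Implicit Types (s u : nat -> R) (lr : int -> R) (B : nat -> set R).

Lemma cyl_iota_map (f : nat -> R) n m B :
  cyl n B [seq f k | k <- iota 0 m.+1] <-> m = n /\ forall k, (k <= n)%N -> B k (f k).
Proof.
rewrite /cyl /= size_map size_iota.
have nthE k : (k <= m)%N -> nth 0 [seq f k | k <- iota 0 m.+1] k = f k.
  by move=> km; rewrite (nth_map 0%N) ?size_iota ?nth_iota.
by split => [[[<-] fB]|[<- fB]]; split => // k km; [rewrite -nthE|rewrite nthE] => //;
  apply: fB.
Qed.

Variable h : R.
Hypothesis h_gt0 : 0 < h.

Definition bottom_set m := [set s | bottom_before h s m].
Definition exit_set := [set u | exists n, exits_top h u n].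
Definition exit_cyl n B :=
  [set u | exits_top h u n /\ forall k, (k <= n)%N -> B k (psum u k)].
Definition bottom_cyl n B :=
  [set s | bottom_before h s n /\
           forall k, (k <= n)%N -> B k (psum s (n - k) - psum s n)].

Definition after_bottom (E : set (nat -> R)) :=
  \bigcup_m (bottom_set m `&` shiftn m @^-1` E).

Lemma exit_cyl_sub n B : exit_cyl n B `<=` exit_set.
Proof. by move=> u [en _]; exists n. Qed.

Lemma m1_exists lr t : Tup lr h = Some t -> exists m, m1 lr h = Some m.
Proof.
move=> Ht; rewrite /m1 Ht /=; have [k _ Hk] := minV_attained lr t.
by apply: (@first_nat_exists _ k); rewrite /= Hk.
Qed.

Lemma bottom_exit_uniq s m m' :
  (bottom_set m `&` shiftn m @^-1` exit_set) s ->
  (bottom_set m' `&` shiftn m' @^-1` exit_set) s -> m = m'.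
Proof.
rewrite -(incr_walk_of s) => -[bm [n en]] [bm' [n' en']].
have [_ E] := Tup_m1_of_bottom h_gt0 bm en.
by have [_] := Tup_m1_of_bottom h_gt0 bm' en'; rewrite E => -[].
Qed.

Lemma has_rise_setE : [set s | exists x, has_rise h s x] = after_bottom exit_set.
Proof.
apply/seteqP; split => s; rewrite /= -(incr_walk_of s); set lr := walk_of s.
  move=> [x /(Vup_geP h_gt0)/(@first_nat_exists (fun x => h <= Vup lr x))[t Ht]].
  have [m Hm] := m1_exists Ht; have [_ bm em] := bottom_of_Tup_m1 h_gt0 Ht Hm.
  by exists m => //; split => //; exists (t - m)%N.
move=> [m _ [bm [n en]]]; exists (m + n)%N.
by have [/(TupP h_gt0) []] := Tup_m1_of_bottom h_gt0 bm en.
Qed.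

Lemma left_path_cylP lr n B :
  (exists q, left_path lr h = Some q /\ cyl n B q) <->
  (bottom_cyl n B `&` shiftn n @^-1` exit_set) (incr lr).
Proof.
rewrite /left_path; split.
  case Ht: (Tup lr h) => [t|]; last by move=> [q []].
  case Hm: (m1 lr h) => [m|]; last by move=> [q []].
  move=> [q [[<-] /cyl_iota_map [<- Bm]]].
  have [_ bm em] := bottom_of_Tup_m1 h_gt0 Ht Hm.
  by split; [split => // k km; rewrite -!Vn_psum; apply: Bm|exists (t - m)%N].
move=> [[bn Bn] [k ek]]; have [-> ->] := Tup_m1_of_bottom h_gt0 bn ek.
eexists; split; first by [].
by apply/cyl_iota_map; split => // j jn; rewrite !Vn_psum; apply: Bn.
Qed.

Lemma right_path_cylP lr n B :
  (exists q, right_path lr h = Some q /\ cyl n B q) <->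
  after_bottom (exit_cyl n B) (incr lr).
Proof.
rewrite /right_path; split.
  case Ht: (Tup lr h) => [t|]; last by move=> [q []].
  case Hm: (m1 lr h) => [m|]; last by move=> [q []].
  move=> [q [[<-] /cyl_iota_map [<- Bm]]].
  have [_ bm em] := bottom_of_Tup_m1 h_gt0 Ht Hm.
  by exists m => //; split => //; split => // k kn; rewrite psum_shiftn -!Vn_psum; apply: Bm.
move=> [m _ [bm [en Bn]]]; have [-> ->] := Tup_m1_of_bottom h_gt0 bm en.
eexists; split; first by [].
by apply/cyl_iota_map; rewrite addKn; split => // k kn; rewrite !Vn_psum -psum_shiftn; apply: Bn.
Qed.

Lemma paths_cylP lr n1 n2 B1 B2 :
  (exists q, left_path lr h = Some q /\ cyl n1 B1 q) /\
  (exists q, right_path lr h = Some q /\ cyl n2 B2 q) <->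
  (bottom_cyl n1 B1 `&` shiftn n1 @^-1` exit_cyl n2 B2) (incr lr).
Proof.
rewrite left_path_cylP right_path_cylP; split.
  move=> [[[bn Bn] en] [m _ [bm em]]].
  suff mn : m = n1 by subst m.
  by apply: (bottom_exit_uniq (s := incr lr)); split => //; exists n2; case: em.
move=> [[bn Bn] [en Bn2]]; split; first by split => //; exists n2.
by exists n1.
Qed.

Lemma TV_geP lr n : TV_ge lr h = Some n <->
  [/\ (1 <= n)%N, h <= psum (incr lr) n & forall k, (k < n)%N -> psum (incr lr) k < h].
Proof.
have below k : ~~ ((1 <= k)%N && (h <= Vn lr k)) <-> psum (incr lr) k < h.
  by case: k => [|k]; rewrite /= ?psum0 // -ltNge Vn_psum.
rewrite /TV_ge first_natP -Vn_psum; split => [[/andP[n1 hn] bn]|[n1 hn bn]].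
  by split => // k /bn /below.
by split => [|k /bn /below] //; rewrite n1 hn.
Qed.

Lemma TV_negP lr n : lt_opt (Some n) (TV_neg lr) <->
  forall k, (k <= n)%N -> 0 <= psum (incr lr) k.
Proof.
have nonneg k : ~~ ((1 <= k)%N && (Vn lr k < 0)) <-> 0 <= psum (incr lr) k.
  by case: k => [|k]; rewrite /= ?psum0 // -leNgt Vn_psum.
rewrite /TV_neg; case E: first_nat => [m|] /=; last first.
  by move/first_natNone: E => none; split => // _ k _; apply/nonneg.
move/first_natP: E => [/andP[_ negm] before]; split.
  by move=> nm k kn; apply/nonneg/before; lia.
by move=> ge0; rewrite ltnNge; apply/negP => /ge0; rewrite -Vn_psum leNgt negm.
Qed.

Lemma exits_top_TVP lr n : exits_top h (incr lr) n <->
  TV_ge lr h = Some n /\ lt_opt (TV_ge lr h) (TV_neg lr).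
Proof.
split => [[stay exit]|[Hge]].
  have Hge : TV_ge lr h = Some n.
    apply/TV_geP; split => // [|k /stay[]//].
    by case: n stay exit => // _; rewrite psum0 leNgt h_gt0.
  rewrite Hge; split => //; apply/TV_negP => k; rewrite leq_eqVlt => /orP[/eqP->|/stay[]//].
  exact: le_trans (ltW h_gt0) exit.
rewrite Hge => /TV_negP ge0; move/TV_geP: Hge => [_ exit below].
by split => // k kn; rewrite ge0 ?below // ltnW.
Qed.

Lemma cond_eventP lr : lt_opt (TV_ge lr h) (TV_neg lr) <-> exit_set (incr lr).
Proof.
split => [|[n /exits_top_TVP[]//]].
by case E: TV_ge => [n|] // lt; exists n; apply/exits_top_TVP; rewrite E.
Qed.

Lemma hit_path_cylP lr n B :
  (exists q, hit_path lr h = Some q /\ cyl n B q) /\ lt_opt (TV_ge lr h) (TV_neg lr) <->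
  exit_cyl n B (incr lr).
Proof.
rewrite /hit_path; split.
  case Ht: TV_ge => [t|]; last by move=> [[q []]].
  move=> [[q [[<-] /cyl_iota_map [<- Bt]]] lt]; split; first by apply/exits_top_TVP; rewrite Ht.
  by move=> k kt; rewrite -Vn_psum; apply: Bt.
move=> [/exits_top_TVP[Ht lt] Bn]; rewrite Ht in lt *; split => //.
eexists; split; first by [].
by apply/cyl_iota_map; split => // k kn; rewrite Vn_psum; apply: Bn.
Qed.

End path_events.

Section measurable_sets.
Context d (U : measurableType d) (R : realType).
Implicit Types (Q : set U) (f g : U -> R).

Lemma measurable_forall (Q : nat -> set U) : (forall k, measurable (Q k)) ->
  measurable [set x | forall k, Q k x].
Proof.
move=> mQ; rewrite (_ : [set x | forall k, Q k x] = \bigcap_k Q k).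
  exact: bigcapT_measurable.
by apply/seteqP; split => x /= Qx k //; apply: Qx.
Qed.

Lemma measurable_exists (Q : nat -> set U) : (forall k, measurable (Q k)) ->
  measurable [set x | exists k, Q k x].
Proof.
move=> mQ; rewrite (_ : [set x | exists k, Q k x] = \bigcup_k Q k).
  exact: bigcupT_measurable.
by apply/seteqP; split => x /= [k]; exists k.
Qed.

Lemma measurable_guard (b : bool) Q : (b -> measurable Q) ->
  measurable [set x | b -> Q x].
Proof.
case: b => [/(_ isT) mQ|_]; last first.
  by rewrite (_ : [set x | false -> Q x] = setT) //; apply/seteqP; split.
by rewrite (_ : [set x | true -> Q x] = Q) //; apply/seteqP; split => x /= //; apply.
Qed.

Lemma measurable_preimage f (B : set R) : measurable_fun setT f -> measurable B ->
  measurable [set x | B (f x)].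
Proof. by move=> mf mB; rewrite -[X in measurable X]setTI; exact: mf. Qed.

Lemma measurable_ltr f g : measurable_fun setT f -> measurable_fun setT g ->
  measurable [set x | f x < g x].
Proof.
move=> mf mg; rewrite -[X in measurable X]setTI.
exact: (measurable_fun_ltr mf mg measurableT (Y := [set true]) I).
Qed.

Lemma measurable_ler f g : measurable_fun setT f -> measurable_fun setT g ->
  measurable [set x | f x <= g x].
Proof.
move=> mf mg; rewrite -[X in measurable X]setTI.
exact: (measurable_fun_ler mf mg measurableT (Y := [set true]) I).
Qed.
Lemma measurable_psum (c : U -> nat -> R) n :
  (forall i, (i < n)%N -> measurable_fun setT (c ^~ i)) ->
  measurable_fun setT (fun x => psum (c x) n).
Proof. by move=> mc; apply: measurable_sum => i; exact: mc. Qed.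

Lemma pos_level_of_measure_gt0 (mu : {measure set U -> \bar R}) f : measurable_fun setT f ->
  (0 < mu [set x | (0 < f x)%R])%E -> exists2 e : R, 0 < e & (0 < mu (f @^-1` `]e, +oo[))%E.
Proof.
move=> mf mu_pos; apply: contrapT => none.
have null k : mu (f @^-1` `](k.+1%:R)^-1, +oo[) = 0.
  apply/eqP; rewrite eq_le measure_ge0 andbT leNgt; apply/negP => gt0.
  by apply: none; exists (k.+1%:R)^-1 => //; rewrite invr_gt0 ltr0n.
have mpre (e : R) : measurable (f @^-1` `]e, +oo[).
  by rewrite -[X in measurable X]setTI; exact: (mf measurableT _ (measurable_itv _)).
suff : (mu [set x | (0 < f x)%R] <= \sum_(k <oo) mu (f @^-1` `](k.+1%:R)^-1%R, +oo[))%E.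
  by rewrite eseries0 ?leNgt ?mu_pos // => k _ _; rewrite null.
apply: measure_sigma_subadditive => //.
  by rewrite (_ : [set x | _] = f @^-1` `]0, +oo[) //; apply/seteqP; split => x /=;
    rewrite in_itv /= andbT.
move=> x /= fx0; have xi : 0 <= (f x)^-1 by rewrite invr_ge0 ltW.
exists (Num.Def.archi_bound (f x)^-1) => //=; rewrite in_itv /= andbT.
rewrite invf_plt ?posrE ?ltr0n //; apply: (lt_trans (archi_boundP xi)).
by rewrite ltr_nat.
Qed.

End measurable_sets.

Section ereal_series.
Context {R : realType}.
Local Open Scope ereal_scope.

Lemma nneseries_mulr_ratio (f : nat -> \bar R) (r b : R) : (forall n, 0 <= f n) ->
  (0 <= r)%R -> \sum_(n <oo) (f n * r%:E) = 1 ->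
  r != 0%R /\ \sum_(n <oo) (f n * b%:E) = (b / r)%:E.
Proof.
move=> f0 r0; have sumZ c : \sum_(n <oo) (f n * c%:E) = c%:E * \sum_(n <oo) f n.
  by rewrite -nneseriesZl //; apply: eq_eseriesr => n _; rewrite muleC.
rewrite !sumZ; have : 0 <= \sum_(n <oo) f n by exact: nneseries_ge0.
case: (\sum_(n <oo) f n) => [x _ [rx1]| _|//].
  have rn0 : r != 0%R by apply: contra_eq_neq rx1 => ->; rewrite mul0r eq_sym oner_eq0.
  have -> : x = r^-1%R by apply: (mulfI rn0); rewrite rx1 mulfV.
  by split => //; rewrite -EFinM.
move: r0; rewrite le_eqVlt => /predU1P[<-|r0].
  by rewrite mul0e => /esym/eqP; rewrite onee_eq0.
by rewrite muleC gt0_mulye ?lte_fin.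
Qed.

End ereal_series.

Lemma le_expr_eq0 (R : realType) (x q : R) : 0 < q -> q <= 1 -> 0 <= x ->
  (forall N, x <= (1 - q) ^+ N) -> x = 0.
Proof.
move=> q0 q1 x0 le_pow; apply/le_anti; rewrite x0 andbT.
have lt1 : `|1 - q| < 1 by rewrite ger0_norm ?subr_ge0 // ltrBlDr ltrDl.
have cvg0 : (fun n => (1 - q) ^+ n) @ \oo --> 0 := cvg_expr lt1.
rewrite -(cvg_lim _ cvg0) //.
by apply: limr_ge; [exact: cvgP cvg0|near=> N; exact: le_pow].
Unshelve. all: by end_near.
Qed.

(* [g_sigma_algebraType] needs a pointed carrier, and [nat -> R] has no such instance. *)
Definition realseq (R : realType) := nat -> R.
HB.instance Definition _ (R : realType) := Choice.on (realseq R).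
HB.instance Definition _ (R : realType) := isPointed.Build (realseq R) (fun=> 0).

Section boxes.
Context {R : realType}.
Implicit Types (B C : nat -> set R) (A : set (realseq R)).

Definition prefix_box n B : set (realseq R) := [set s | forall i, (i < n)%N -> B i (s i)].
Definition avoids_box K B N : set (realseq R) :=
  [set s | forall j, (j < N)%N -> ~ prefix_box K B (shiftn (j * K) s)].
(* [<<s boxes_of n >>] is the sigma-algebra generated by the first n coordinates and
   [<<s boxes >>] the product sigma-algebra. *)
Definition boxes_of n := prefix_box n @` [set B | forall i, measurable (B i)].
Definition boxes := \bigcup_n boxes_of n.

Lemma prefix_boxT n : prefix_box n (fun=> setT) = setT.
Proof. by apply/seteqP; split. Qed.

Lemma prefix_box_cat m n B C :
  prefix_box m B `&` shiftn m @^-1` prefix_box n C =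
  prefix_box (m + n) (fun i => if (i < m)%N then B i else C (i - m)%N).
Proof.
apply/seteqP; split => s /=.
  move=> [Bs Cs] i imn; case: ifPn => [/Bs//|]; rewrite -leqNgt => mi.
  by have := Cs (i - m)%N; rewrite /shiftn subnKC //; apply; lia.
move=> BCs; split => [i im|i ilt]; first by have := BCs i; rewrite im; apply; lia.
by have := BCs (m + i)%N; rewrite ifN ?addKn; [apply; lia|lia].
Qed.

Lemma setI_closed_boxes_of n : setI_closed (boxes_of n).
Proof.
move=> _ _ [B mB <-] [C mC <-]; exists (fun i => B i `&` C i).
  by move=> i; exact: measurableI.
by apply/seteqP; split => s /= BCs; [split => i /BCs[]|move=> i ilt; split; apply BCs].
Qed.

Lemma setI_closed_boxes : setI_closed boxes.
Proof.
move=> _ _ [m _ [B mB <-]] [n _ [C mC <-]].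
pose ext k (D : nat -> set R) i := if (i < k)%N then D i else setT.
exists (maxn m n) => //; exists (fun i => ext m B i `&` ext n C i).
  by move=> i; apply: measurableI; rewrite /ext; case: ifP.
apply/seteqP; split => s /=.
  move=> BCs; split => i lt.
    by have := BCs i; rewrite /ext lt leq_max lt => /(_ isT) [].
  by have := BCs i; rewrite /ext lt leq_max lt orbT => /(_ isT) [].
move=> [Bs Cs] i _; rewrite /ext.
by split; case: ifPn => // lt; [exact: Bs i lt|exact: Cs i lt].
Qed.

Lemma sigma_boxes_of_sub n A : <<s boxes_of n >> A -> <<s boxes >> A.
Proof. by apply: sub_sigma_algebra2 => B bB; exists n. Qed.

Local Notation Sigma := (g_sigma_algebraType boxes).

Lemma measurable_shiftn m : measurable_fun (setT : set Sigma) (shiftn m : Sigma -> Sigma).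
Proof.
apply: (@measurability _ _ Sigma Sigma _ _ boxes) => //.
move=> _ [A [n _ [C mC <-]] <-]; rewrite setTI.
rewrite -[X in measurable X]setTI -(prefix_boxT m) prefix_box_cat.
apply: sub_sigma_algebra; exists (m + n)%N => //; eexists; last by [].
by move=> i /=; case: ifP.
Qed.

Lemma sigma_boxes_shiftn m A : <<s boxes >> A -> <<s boxes >> (shiftn m @^-1` A).
Proof. by move=> mA; have := measurable_shiftn m measurableT mA; rewrite setTI. Qed.

Lemma measurable_coord n i : (i < n)%N ->
  measurable_fun (setT : set (g_sigma_algebraType (boxes_of n))) (fun s : realseq R => s i).
Proof.
move=> ilt _ Y mY; rewrite setTI; apply: sub_sigma_algebra.
exists (fun j => if j == i then Y else setT); first by move=> j; case: eqP.
apply/seteqP; split => s /=; first by move=> Ys; have := Ys i ilt; rewrite eqxx.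
by move=> Ys j _; case: eqP => // ->.
Qed.

Lemma sigma_avoids_box K B N : (forall i, measurable (B i)) ->
  <<s boxes_of (N * K) >> (avoids_box K B N).
Proof.
move=> mB; apply: (@measurable_forall _ (g_sigma_algebraType (boxes_of (N * K)))) => j.
apply: measurable_guard => jN; apply: measurableC.
apply: measurable_forall => i; apply: measurable_guard => iK.
by apply: measurable_preimage (mB i); apply: measurable_coord; nia.
Qed.

End boxes.

Section walk_sets.
Context {R : realType} (h : R).
Implicit Types (B : nat -> set R).
Local Notation Sigma_of n := (g_sigma_algebraType (@boxes_of R n)).

Lemma measurable_psum_boxes_of n k : (k <= n)%N ->
  measurable_fun (setT : set (Sigma_of n)) (fun s => psum s k).
Proof.
move=> kn; apply: (@measurable_psum _ (Sigma_of n) R (fun s => s)) => i ik.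
by apply: measurable_coord; exact: leq_trans ik kn.
Qed.

Lemma sigma_exits_top n : <<s boxes_of n >> [set u | exits_top h u n].
Proof.
apply: (@measurableI _ (Sigma_of n)); last first.
  by apply: measurable_ler; [exact: measurable_cst|exact: measurable_psum_boxes_of].
apply: measurable_forall => k; apply: measurable_guard => kn.
apply: (@measurableI _ (Sigma_of n)).
  by apply: measurable_ler; [exact: measurable_cst|apply: measurable_psum_boxes_of; exact: ltnW].
by apply: measurable_ltr; [apply: measurable_psum_boxes_of; exact: ltnW|exact: measurable_cst].
Qed.

Lemma sigma_exit_cyl n B : (forall k, measurable (B k)) -> <<s boxes_of n >> (exit_cyl h n B).
Proof.
move=> mB; apply: (@measurableI _ (Sigma_of n)); first exact: sigma_exits_top.
apply: measurable_forall => k; apply: measurable_guard => kn.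
by apply: measurable_preimage (mB k); exact: measurable_psum_boxes_of.
Qed.

Lemma sigma_exit_set : <<s boxes >> (exit_set h).
Proof.
apply: (@measurable_exists _ (g_sigma_algebraType boxes)) => n.
exact: sigma_boxes_of_sub (sigma_exits_top (n := n)).
Qed.

Lemma sigma_bottom_set m : <<s boxes_of m >> (bottom_set h m).
Proof.
apply: (@measurableI _ (Sigma_of m)).
  apply: measurable_forall => j; apply: measurable_guard => jm.
  by apply: measurable_ltr; apply: measurable_psum_boxes_of => //; exact: ltnW.
apply: measurable_forall => i; apply: measurable_forall => j.
apply: measurable_guard => /andP[ij jm]; apply: measurable_ltr; last exact: measurable_cst.
by apply: measurable_funB; apply: measurable_psum_boxes_of => //; exact: leq_trans jm.
Qed.

Lemma sigma_bottom_cyl n B : (forall k, measurable (B k)) ->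
  <<s boxes_of n >> (bottom_cyl h n B).
Proof.
move=> mB; apply: (@measurableI _ (Sigma_of n)); first exact: sigma_bottom_set.
apply: measurable_forall => k; apply: measurable_guard => kn.
apply: measurable_preimage (mB k); apply: measurable_funB.
  by apply: measurable_psum_boxes_of; exact: leq_subr.
exact: measurable_psum_boxes_of.
Qed.

Lemma sigma_bottom_shiftn m E : <<s boxes >> E ->
  <<s boxes >> (bottom_set h m `&` shiftn m @^-1` E).
Proof.
move=> mE; apply: (@measurableI _ (g_sigma_algebraType boxes)).
  exact: sigma_boxes_of_sub (sigma_bottom_set (m := m)).
exact: sigma_boxes_shiftn.
Qed.

Lemma has_rise_of_box (e : R) K j s : h < K%:R * e ->
  prefix_box K (fun=> `]e, +oo[%classic) (shiftn j s) -> has_rise h s (j + K).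
Proof.
move=> hK box; exists j, (j + K)%N; rewrite leq_addr leqnn -psum_shiftn.
split => //; apply: (le_trans (ltW hK)).
rewrite (_ : K%:R * e = \sum_(i < K) e); last by rewrite sumr_const card_ord mulr_natl.
apply: ler_sum => i _.
by have := box i (ltn_ord i); rewrite /= in_itv /= andbT => /ltW.
Qed.

End walk_sets.

Section steps_law.
Context d (T : measurableType d) (R : realType) (P : probability T R).
Variable lrho : int -> T -> R.
Hypotheses (lrho_meas : forall i, measurable_fun setT (lrho i))
  (lrho_indep : mutual_indep P lrho) (lrho_ident : ident_distr P lrho).
Implicit Types (A E : set (realseq R)) (B C : nat -> set R).

Local Notation Sigma := (g_sigma_algebraType (@boxes R)).

Definition steps (w : T) : realseq R := incr (fun i => lrho i w).
Definition Psteps A := P (steps @^-1` A).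

Lemma measurable_lrho_preimage i (Y : set R) : measurable Y -> measurable (lrho i @^-1` Y).
Proof. by move=> mY; rewrite -[X in measurable X]setTI; exact: lrho_meas. Qed.

Lemma measurable_steps : measurable_fun setT (steps : T -> Sigma).
Proof.
apply: (@measurability _ _ T Sigma _ _ boxes) => //.
move=> _ [_ [n _ [B mB <-]] <-]; rewrite setTI.
rewrite (_ : _ @^-1` _ = \bigcap_i (if (i < n)%N then lrho i.+1 @^-1` B i else setT)).
  by apply: bigcapT_measurable => i; case: ifP => // _; exact: measurable_lrho_preimage.
apply/seteqP; split => w /= Bw i; first by case: ifPn => // /Bw.
by move=> ilt; have := Bw i I; rewrite ilt.
Qed.

Lemma measurable_steps_preimage A : <<s boxes >> A -> measurable (steps @^-1` A).
Proof. by move=> mA; have := measurable_steps measurableT mA; rewrite setTI. Qed.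

Lemma Psteps_fin A : <<s boxes >> A -> Psteps A \is a fin_num.
Proof. by move=> mA; apply: fin_num_measure; exact: measurable_steps_preimage. Qed.

Lemma Psteps_box n B : (forall i, measurable (B i)) ->
  Psteps (prefix_box n B) = (\prod_(i < n) P (lrho 0 @^-1` B i))%E.
Proof.
move=> mB; pose I := [seq i.+1%:Z | i <- iota 0 n].
have uI : uniq I by rewrite map_inj_uniq ?iota_uniq // => i j [].
have := @lrho_indep I (fun z : int => B (absz z).-1) uI (fun z => mB _).
rewrite (_ : \bigcap_(i in _) _ = steps @^-1` prefix_box n B).
  rewrite /Psteps => ->; rewrite big_map -[n in iota 0 n]subn0 -/(index_iota 0 n).
  by rewrite big_mkord; apply: eq_bigr => i _; rewrite lrho_ident.
apply/seteqP; split => w /= Bw.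
  by move=> i ilt; apply: (Bw i.+1%:Z); rewrite /= map_f // mem_iota.
by move=> z /mapP[i]; rewrite mem_iota => /andP[_ ilt] ->; exact: Bw.
Qed.

Local Open Scope ereal_scope.

Lemma Psteps_setC A : <<s boxes >> A -> Psteps (~` A) = 1 - Psteps A.
Proof.
by move=> mA; rewrite /Psteps -preimage_setC probability_setC //; exact: measurable_steps_preimage.
Qed.

Lemma Psteps_setD A E : <<s boxes >> A -> <<s boxes >> E ->
  Psteps (A `\` E) = Psteps A - Psteps (A `&` E).
Proof.
move=> mA mE; have [mA' mE'] := (measurable_steps_preimage mA, measurable_steps_preimage mE).
rewrite /Psteps setDE preimage_setI -preimage_setC -setDE measureD // ?preimage_setI //.
by rewrite -ge0_fin_numE //; exact: fin_num_measure.
Qed.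

Lemma Psteps_bigcup (F : nat -> set (realseq R)) : (forall n, <<s boxes >> (F n)) ->
  trivIset setT F -> Psteps (\bigcup_n F n) = \sum_(n <oo) Psteps (F n).
Proof.
move=> mF tF; rewrite /Psteps preimage_bigcup measure_semi_bigcup //.
- by move=> n; exact: measurable_steps_preimage.
- by move=> i j _ _ [w [Fi Fj]]; apply: tF => //; exists (steps w).
- by apply: bigcup_measurable => n _; exact: measurable_steps_preimage.
Qed.

Lemma Psteps_box_cat m n B C : (forall i, measurable (B i)) -> (forall i, measurable (C i)) ->
  Psteps (prefix_box m B `&` shiftn m @^-1` prefix_box n C) =
  Psteps (prefix_box m B) * Psteps (prefix_box n C).
Proof.
move=> mB mC; rewrite prefix_box_cat !Psteps_box //; last by move=> i; case: ifP.
rewrite big_split_ord /=; congr (_ * _); apply: eq_bigr => i _.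
  by rewrite ltn_ord.
by rewrite ltnNge leq_addr addKn.
Qed.

Lemma Psteps_box_shift_indep m B A : (forall i, measurable (B i)) -> <<s boxes >> A ->
  Psteps (prefix_box m B `&` shiftn m @^-1` A) = Psteps (prefix_box m B) * Psteps A.
Proof.
move=> mB; have mbox : <<s boxes >> (prefix_box m B).
  by apply: sub_sigma_algebra; exists m => //; exists B.
move: A; apply: (@dynkin_induction _ Sigma boxes) => //.
- exact: setI_closed_boxes.
- by rewrite preimage_setT setIT /Psteps preimage_setT probability_setT mule1.
- by move=> _ [n _ [C mC <-]]; exact: Psteps_box_cat.
- move=> A mA indepA; rewrite -preimage_setC -setDE Psteps_setD //; last exact: sigma_boxes_shiftn.
  by rewrite indepA Psteps_setC // muleBr ?mule1 ?fin_num_adde_defr //; exact: Psteps_fin.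
- move=> F mF tF indepF; rewrite preimage_bigcup setI_bigcupr !Psteps_bigcup //.
  + rewrite -(fineK (Psteps_fin mbox)) -nneseriesZl //.
    by apply: eq_eseriesr => k _; rewrite fineK ?indepF //; exact: Psteps_fin.
  + by move=> k; apply: (@measurableI _ Sigma); [exact: mbox|exact: sigma_boxes_shiftn (mF k)].
  + by move=> i j _ _ [s [[_ Fi] [_ Fj]]]; apply: tF => //; exists (shiftn m s).
Qed.

Lemma Psteps_shiftn m A : <<s boxes >> A -> Psteps (shiftn m @^-1` A) = Psteps A.
Proof.
move=> mA; have := Psteps_box_shift_indep m (fun=> measurableT) mA.
by rewrite prefix_boxT setTI /Psteps preimage_setT probability_setT mul1e.
Qed.

Lemma Psteps_shift_indep m A E : <<s boxes_of m >> A -> <<s boxes >> E ->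
  Psteps (A `&` shiftn m @^-1` E) = Psteps A * Psteps E.
Proof.
move=> + mE; move: A; apply: (@dynkin_induction _ (g_sigma_algebraType (boxes_of m))) => //.
- exact: setI_closed_boxes_of.
- by rewrite setTI Psteps_shiftn // /Psteps preimage_setT probability_setT mul1e.
- by move=> _ [B mB <-]; exact: Psteps_box_shift_indep.
- move=> A /sigma_boxes_of_sub mA indepA; have mE' := sigma_boxes_shiftn m mE.
  rewrite setIC -setDE Psteps_setD // setIC indepA Psteps_shiftn // Psteps_setC //.
  by rewrite muleBl ?mul1e ?fin_num_adde_defr //; exact: Psteps_fin.
- move=> F /(_ _)/sigma_boxes_of_sub mF tF indepF.
  rewrite setI_bigcupl !Psteps_bigcup //.
  + rewrite muleC -(fineK (Psteps_fin mE)) -nneseriesZl //.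
    by apply: eq_eseriesr => k _; rewrite fineK ?indepF 1?muleC //; exact: Psteps_fin.
  + by move=> k; apply: (@measurableI _ Sigma); [exact: mF|exact: sigma_boxes_shiftn].
  + by move=> i j _ _ [s [[Fi _] [Fj _]]]; apply: tF => //; exists s.
Qed.

Lemma Psteps_avoids_box K B N : (forall i, measurable (B i)) ->
  Psteps (avoids_box K B N) = ((1 - fine (Psteps (prefix_box K B))) ^+ N)%:E.
Proof.
move=> mB; have mbox : <<s boxes >> (prefix_box K B).
  by apply: sub_sigma_algebra; exists K => //; exists B.
elim: N => [|N IH].
  rewrite (_ : avoids_box K B 0 = setT); last by apply/seteqP; split.
  by rewrite /Psteps preimage_setT probability_setT.
rewrite (_ : avoids_box K B N.+1 =
             avoids_box K B N `&` shiftn (N * K) @^-1` ~` prefix_box K B).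
  rewrite Psteps_shift_indep; [|exact: sigma_avoids_box|exact: (@measurableC _ Sigma _ mbox)].
  by rewrite IH Psteps_setC // -(fineK (Psteps_fin mbox)) -EFinB -EFinM exprSr.
apply/seteqP; split => s /=; first by move=> av; split => [j jN|]; apply: av; lia.
by move=> [av nb] j; rewrite ltnS leq_eqVlt => /orP[/eqP->//|]; exact: av.
Qed.

Variable h : R.
Hypothesis h_gt0 : (0 < h)%R.

Lemma Psteps_after_bottom E : <<s boxes >> E -> E `<=` exit_set h ->
  Psteps (after_bottom h E) = \sum_(m <oo) (Psteps (bottom_set h m) * Psteps E).
Proof.
move=> mE Eexit; rewrite Psteps_bigcup.
- by apply: eq_eseriesr => m _; apply: Psteps_shift_indep => //; exact: sigma_bottom_set.
- by move=> m; exact: sigma_bottom_shiftn.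
- move=> i j _ _ [s [[bi /Eexit ei] [bj /Eexit ej]]].
  exact: (bottom_exit_uniq h_gt0 (conj bi ei) (conj bj ej)).
Qed.

Hypothesis pos_step : (0 < P [set w | (0 < lrho 0 w)%R])%E.

Lemma Psteps_has_rise : Psteps [set s | exists x, has_rise h s x] = 1.
Proof.
have [e e0 Pe] := pos_level_of_measure_gt0 (lrho_meas 0) pos_step.
pose B (_ : nat) := `]e, +oo[%classic : set R.
have mB i : measurable (B i) by exact: measurable_itv.
pose K := Num.Def.archi_bound (h / e).
have hK : (h < K%:R * e)%R.
  by rewrite -ltr_pdivrMr //; apply: archi_boundP; rewrite divr_ge0 // ltW.
have pE : P (lrho 0 @^-1` B 0%N) = (fine (P (lrho 0 @^-1` B 0%N)))%:E.
  by rewrite fineK // fin_num_measure //; exact: measurable_lrho_preimage.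
set q := fine (Psteps (prefix_box K B)).
have qE : q = (fine (P (lrho 0 @^-1` B 0%N)) ^+ K)%R.
  by rewrite /q Psteps_box // pE prodEFin prodr_const card_ord.
have q0 : (0 < q)%R by rewrite qE exprn_gt0 // -lte_fin -pE.
have q1 : (q <= 1)%R.
  rewrite qE exprn_ile1 // -lee_fin -pE ?probability_le1 ?fine_ge0 //.
  exact: measurable_lrho_preimage.
set rise := [set s | exists x, has_rise h s x].
have mrise : <<s boxes >> rise.
  rewrite /rise has_rise_setE //; apply: (@bigcupT_measurable _ Sigma) => m.
  by apply: sigma_bottom_shiftn; exact: sigma_exit_set.
have norise_avoid N : ~` rise `<=` avoids_box K B N.
  by move=> s norise j _ /(has_rise_of_box hK) rise_j; apply: norise; exists (j * K + K)%N.
have mnorise : <<s boxes >> (~` rise) by exact: (@measurableC _ Sigma).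
have le N : (fine (Psteps (~` rise)) <= (1 - q) ^+ N)%R.
  rewrite -lee_fin fineK ?Psteps_fin // -Psteps_avoids_box //.
  apply: le_measure; rewrite ?inE; last by move=> w; exact: norise_avoid.
    exact: measurable_steps_preimage.
  exact: measurable_steps_preimage (sigma_boxes_of_sub (sigma_avoids_box (N := N) mB)).
have norise0 := le_expr_eq0 q0 q1 (fine_ge0 (measure_ge0 _ _)) le.
by rewrite -(setCK rise) Psteps_setC // -(fineK (Psteps_fin mnorise)) norise0 sube0.
Qed.

Lemma Psteps_bottom_exit :
  \sum_(m <oo) (Psteps (bottom_set h m) * Psteps (exit_set h)) = 1.
Proof.
rewrite -Psteps_after_bottom //; last exact: sigma_exit_set.
by rewrite -has_rise_setE // Psteps_has_rise.
Qed.

Lemma Psteps_after_bottom_ratio E : <<s boxes >> E -> E `<=` exit_set h ->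
  fine (Psteps (exit_set h)) != 0%R /\
  Psteps (after_bottom h E) = (fine (Psteps E) / fine (Psteps (exit_set h)))%:E.
Proof.
move=> mE Eexit; rewrite Psteps_after_bottom // -(fineK (Psteps_fin mE)).
apply: nneseries_mulr_ratio; first by move=> m; exact: measure_ge0.
  exact/fine_ge0/measure_ge0.
by rewrite fineK ?Psteps_bottom_exit //; exact: Psteps_fin (sigma_exit_set h).
Qed.

Lemma steps_preimageE (X : (int -> R) -> Prop) A :
  (forall lr, X lr <-> A (incr lr)) -> [set w | X (fun i => lrho i w)] = steps @^-1` A.
Proof. by move=> XA; apply/seteqP; split => w /XA. Qed.

Let left_proc w := left_path (fun i => lrho i w) h.
Let right_proc w := right_path (fun i => lrho i w) h.
Let hit_proc w := hit_path (fun i => lrho i w) h.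
Let cond_ev := [set w | lt_opt (TV_ge (fun i => lrho i w) h) (TV_neg (fun i => lrho i w))].

Lemma P_left_event n B :
  P (pev left_proc (cyl n B)) = Psteps (bottom_cyl h n B `&` shiftn n @^-1` exit_set h).
Proof. by rewrite /Psteps -(steps_preimageE (fun lr => left_path_cylP h_gt0 lr n B)). Qed.

Lemma P_right_event n B :
  P (pev right_proc (cyl n B)) = Psteps (after_bottom h (exit_cyl h n B)).
Proof. by rewrite /Psteps -(steps_preimageE (fun lr => right_path_cylP h_gt0 lr n B)). Qed.

Lemma P_left_right_event n1 n2 B1 B2 :
  P (pev left_proc (cyl n1 B1) `&` pev right_proc (cyl n2 B2)) =
  Psteps (bottom_cyl h n1 B1 `&` shiftn n1 @^-1` exit_cyl h n2 B2).
Proof. by rewrite /Psteps -(steps_preimageE (fun lr => paths_cylP h_gt0 lr n1 n2 B1 B2)). Qed.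

Lemma P_hit_cond_event n B : P (pev hit_proc (cyl n B) `&` cond_ev) = Psteps (exit_cyl h n B).
Proof. by rewrite /Psteps -(steps_preimageE (fun lr => hit_path_cylP h_gt0 lr n B)). Qed.

Lemma P_cond_event : P cond_ev = Psteps (exit_set h).
Proof. by rewrite /Psteps -(steps_preimageE (fun lr => cond_eventP h_gt0 lr)). Qed.

Lemma left_right_paths_indep : paths_indep P left_proc right_proc.
Proof.
move=> n1 n2 B1 B2 mB1 mB2; rewrite P_left_right_event P_left_event P_right_event.
have mexit := sigma_boxes_of_sub (sigma_exit_cyl h (n := n2) mB2).
have [r0 ->] := Psteps_after_bottom_ratio mexit (@exit_cyl_sub _ h n2 B2).
have mbot := sigma_bottom_cyl h (n := n1) mB1.
rewrite !Psteps_shift_indep //; last exact: sigma_exit_set.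
move: r0 (Psteps_fin (sigma_boxes_of_sub mbot)) (Psteps_fin mexit) (Psteps_fin (sigma_exit_set h)).
case: (Psteps (bottom_cyl h n1 B1)) => [a| |] //; case: (Psteps (exit_cyl h n2 B2)) => [b| |] //.
by case: (Psteps (exit_set h)) => [r| |] //= r0 _ _ _; rewrite -!EFinM; congr EFin; field.
Qed.

Lemma right_path_law : path_law_cond P right_proc hit_proc cond_ev.
Proof.
move=> n B mB; rewrite /cond_prob P_hit_cond_event P_cond_event P_right_event.
by have [_ ->] := Psteps_after_bottom_ratio (sigma_boxes_of_sub (sigma_exit_cyl h (n := n) mB))
  (@exit_cyl_sub _ h n B).
Qed.
End steps_law.

Theorem proposition5p2 (d : measure_display) (T : measurableType d) (R : realType)
  (P : probability T R) (lrho : int -> T -> R)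
  (lrho_meas : forall i, measurable_fun setT (lrho i))
  (lrho_indep : mutual_indep P lrho)
  (lrho_ident : ident_distr P lrho)
  (pos_step : (0 < P [set w | (0 < lrho 0%Z w)%R])%E)
  (neg_step : (0 < P [set w | (lrho 0%Z w < 0)%R])%E)
  (liminf_V : {ae P, forall w,
     limn_einf (fun n => (Vn (fun i => lrho i w) n)%:E) = -oo%E})
  (h : R) (h_pos : 0 < h) :
  let left_proc := fun w => left_path (fun i => lrho i w) h in
  let right_proc := fun w => right_path (fun i => lrho i w) h in
  let V_proc := fun w => hit_path (fun i => lrho i w) h in
  let cond_ev := [set w | lt_opt (TV_ge (fun i => lrho i w) h) (TV_neg (fun i => lrho i w))] in
  paths_indep P left_proc right_proc /\
  path_law_cond P right_proc V_proc cond_ev.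
Proof.
move=> left_proc right_proc V_proc cond_ev; split.
  exact: (left_right_paths_indep lrho_meas lrho_indep lrho_ident h_pos pos_step).
exact: (right_path_law lrho_meas lrho_indep lrho_ident h_pos pos_step).
Qed.
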